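(* Let $P:\mathcal{C}^{op}\to\mathsf{InfSl}$ be an elementary and existential doctrine. Then the maps of the cartesian bicategory $\mathsf{Rel}(P)$ are precisely the elements $\phi\in P(X\times Y)$ that are both functional and entire from $X$ to $Y$.
   Context: An elementary and existential doctrine is a functor $P:\mathcal{C}^{op}\to\mathsf{InfSl}$ from a category with finite products to inf-semilattices such that for each $Y$ there is an equality predicate $\delta_Y\in P(Y\times Y)$ with $\alpha\mapsto P_{\langle\pi_1,\pi_2\rangle}(\alpha)\wedge P_{\langle\pi_2,\pi_3\rangle}(\delta_Y)$ left adjoint to $P_{\mathrm{id}_X\times\Delta_Y}:P(X\times Y\times Y)\to P(X\times Y)$, and for each projection $\pi_X:X\times Y\to X$, $P_{\pi_X}$ has a left adjoint $\exists_{\pi_X}$ satisfying Beck–Chevalley and Frobenius reciprocity. $\mathsf{Rel}(P)$ is the cartesian bicategory whose objects are those of $\mathcal{C}$, with $\mathsf{Rel}(P)[X,Y]=P(X\times Y)$ (ordered as in $P$), identities $\delta_X$, composition of $\phi:X\to Y$, $\psi:Y\to Z$ given by $\exists_{\pi_{X\times Z}}(P_{\pi_{X\times Y}}(\phi)\wedge P_{\pi_{Y\times Z}}(\psi))$ (projections out of $X\times Y\times Z$), monoidal product on objects the product of $\mathcal{C}$ and on arrows $\phi\otimes\psi=P_{\langle\pi_X,\pi_Y\rangle}(\phi)\wedge P_{\langle\pi_U,\pi_V\rangle}(\psi)$, and comonoids $\mathrm{copy}_X=\Gamma_P(\Delta_X)$, $\mathrm{disc}_X=\Gamma_P(!_X)$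 and monoids $\mathrm{cocopy}_X=P_{\mathrm{id}_{X\times X}\times\Delta_X}(\delta_{X\times X})$, $\mathrm{codisc}_X=P_{\mathrm{id}_1\times !_X}(\delta_1)$, where $\Gamma_P(f)=P_{f\times\mathrm{id}_Y}(\delta_Y)$ for $f:X\to Y$. In a cartesian bicategory (composition in diagrammatic order) an arrow $f:X\to Y$ is a map if $f;\mathrm{copy}_Y\ge\mathrm{copy}_X;(f\otimes f)$ and $f;\mathrm{disc}_Y\ge\mathrm{disc}_X$. An element $\alpha\in P(X\times Y)$ is functional from $X$ to $Y$ if $P_{\langle\pi_1,\pi_2\rangle}(\alpha)\wedge P_{\langle\pi_1,\pi_3\rangle}(\alpha)\le P_{\langle\pi_2,\pi_3\rangle}(\delta_Y)$ in $P(X\times Y\times Y)$, and entire from $X$ to $Y$ if $\top_X\le\exists_{\pi_X}(\alpha)$ in $P(X)$. *)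

Set Implicit Arguments.
Unset Strict Implicit.
Set Universe Polymorphism.

Record FPCat := {
  ob :> Type;
  hom : ob -> ob -> Type;
  idm : forall X, hom X X;
  comp : forall X Y Z, hom Y Z -> hom X Y -> hom X Z;
  comp_id_l : forall X Y (f : hom X Y), comp (idm Y) f = f;
  comp_id_r : forall X Y (f : hom X Y), comp f (idm X) = f;
  comp_assoc : forall X Y Z W (h : hom Z W) (g : hom Y Z) (f : hom X Y),
      comp h (comp g f) = comp (comp h g) f;
  one : ob;
  bang : forall X, hom X one;
  bang_uniq : forall X (f : hom X one), f = bang X;
  prd : ob -> ob -> ob;
  p1 : forall X Y, hom (prd X Y) X;
  p2 : forall X Y, hom (prd X Y) Y;
  pair : forall Z X Y, hom Z X -> hom Z Y -> hom Z (prd X Y);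
  pair_p1 : forall Z X Y (f : hom Z X) (g : hom Z Y), comp (p1 X Y) (pair f g) = f;
  pair_p2 : forall Z X Y (f : hom Z X) (g : hom Z Y), comp (p2 X Y) (pair f g) = g;
  pair_uniq : forall Z X Y (h : hom Z (prd X Y)),
      pair (comp (p1 X Y) h) (comp (p2 X Y) h) = h
}.

Arguments idm {_} X.
Arguments comp {_ X Y Z} g f.
Arguments one {_}.
Arguments bang {_} X.
Arguments prd {_} X Y.
Arguments p1 {_} X Y.
Arguments p2 {_} X Y.
Arguments pair {_ Z X Y} f g.

Section Derived.
Context {C : FPCat}.
Definition prodm {X Y U V : C} (f : hom X Y) (g : hom U V) : hom (prd X U) (prd Y V) :=
  pair (comp f (p1 X U)) (comp g (p2 X U)).
Definition diag (X : C) : hom X (prd X X) := pair (idm X) (idm X).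
End Derived.

Record Doctrine (C : FPCat) := {
  P :> C -> Type;
  le : forall X, P X -> P X -> Prop;
  meet : forall X, P X -> P X -> P X;
  top : forall X, P X;
  le_refl : forall X (a : P X), le a a;
  le_trans : forall X (a b c : P X), le a b -> le b c -> le a c;
  le_antisym : forall X (a b : P X), le a b -> le b a -> a = b;
  meet_glb : forall X (a b c : P X), le c (meet a b) <-> (le c a /\ le c b);
  top_max : forall X (a : P X), le a (top X);
  reidx : forall X Y, hom X Y -> P Y -> P X;
  reidx_meet : forall X Y (f : hom X Y) (a b : P Y),
      reidx f (meet a b) = meet (reidx f a) (reidx f b);
  reidx_top : forall X Y (f : hom X Y), reidx f (top Y) = top X;
  reidx_id : forall X (a : P X), reidx (idm X) a = a;
  reidx_comp : forall X Y Z (f : hom X Y) (g : hom Y Z) (a : P Z),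
      reidx (comp g f) a = reidx f (reidx g a)
}.

Arguments le {_ _ X} a b.
Arguments meet {_ _ X} a b.
Arguments top {_ _} X.
Arguments reidx {_ _ X Y} f a.

(* Ternary products X x Y x Y are represented as X x (Y x Y), with
   pi1 = p1, pi2 = p1 o p2, pi3 = p2 o p2. *)
Record ElemExDoctrine (C : FPCat) := {
  D :> Doctrine C;
  delta : forall Y : C, D (prd Y Y);
  (* alpha |-> P_<pi1,pi2>(alpha) /\ P_<pi2,pi3>(delta_Y)  is left adjoint
     to P_{id_X x Delta_Y} : P(X x Y x Y) -> P(X x Y) *)
  delta_adj : forall (X Y : C) (a : D (prd X Y)) (b : D (prd X (prd Y Y))),
      le (meet (reidx (pair (p1 X (prd Y Y)) (comp (p1 Y Y) (p2 X (prd Y Y)))) a)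
               (reidx (pair (comp (p1 Y Y) (p2 X (prd Y Y)))
                            (comp (p2 Y Y) (p2 X (prd Y Y)))) (delta Y))) b
      <-> le a (reidx (prodm (idm X) (diag Y)) b);
  ex : forall X Y : C, D (prd X Y) -> D X;
  ex_adj : forall (X Y : C) (a : D (prd X Y)) (b : D X),
      le (ex a) b <-> le a (reidx (p1 X Y) b);
  ex_BC : forall (X' X Y : C) (f : hom X' X) (a : D (prd X Y)),
      reidx f (ex a) = ex (reidx (prodm f (idm Y)) a);
  ex_Frob : forall (X Y : C) (a : D (prd X Y)) (b : D X),
      ex (meet a (reidx (p1 X Y) b)) = meet (ex a) b
}.

Arguments delta {_ _} Y.
Arguments ex {_ _ X Y} a.

Section Rel.
Context {C : FPCat} (P : ElemExDoctrine C).

Definition RelHom (X Y : C) : Type := P (prd X Y).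

Definition rel_id (X : C) : RelHom X X := delta X.

(* composition phi ; psi: the triple product X x Y x Z is represented as
   (X x Z) x Y, so that pi_{X x Z} is a product projection. *)
Definition rel_comp {X Y Z : C} (phi : RelHom X Y) (psi : RelHom Y Z) : RelHom X Z :=
  let T := prd (prd X Z) Y in
  let pX : hom T X := comp (p1 X Z) (p1 (prd X Z) Y) in
  let pZ : hom T Z := comp (p2 X Z) (p1 (prd X Z) Y) in
  let pY : hom T Y := p2 (prd X Z) Y in
  ex (Y := Y) (meet (d := P) (reidx (pair pX pY) phi) (reidx (pair pY pZ) psi)).

Definition rel_tensor {X Y U V : C} (phi : RelHom X Y) (psi : RelHom U V)
  : RelHom (prd X U) (prd Y V) :=
  let T := prd (prd X U) (prd Y V) in
  let pX : hom T X := comp (p1 X U) (p1 (prd X U) (prd Y V)) in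
  let pU : hom T U := comp (p2 X U) (p1 (prd X U) (prd Y V)) in
  let pY : hom T Y := comp (p1 Y V) (p2 (prd X U) (prd Y V)) in
  let pV : hom T V := comp (p2 Y V) (p2 (prd X U) (prd Y V)) in
  meet (d := P) (reidx (pair pX pY) phi) (reidx (pair pU pV) psi).

Definition Gamma {X Y : C} (f : hom X Y) : RelHom X Y :=
  reidx (d := P) (prodm f (idm Y)) (delta Y).

Definition copy (X : C) : RelHom X (prd X X) := Gamma (diag X).
Definition disc (X : C) : RelHom X one := Gamma (bang X).
Definition cocopy (X : C) : RelHom (prd X X) X :=
  reidx (d := P) (prodm (idm (prd X X)) (diag X)) (delta (prd X X)).
Definition codisc (X : C) : RelHom one X :=
  reidx (d := P) (prodm (idm one) (bang X)) (delta one).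

Definition is_map {X Y : C} (f : RelHom X Y) : Prop :=
  le (d := P) (rel_comp (copy X) (rel_tensor f f)) (rel_comp f (copy Y))
  /\ le (d := P) (disc X) (rel_comp f (disc Y)).

Definition functional {X Y : C} (a : P (prd X Y)) : Prop :=
  let T := prd X (prd Y Y) in
  let q1 : hom T X := p1 X (prd Y Y) in
  let q2 : hom T Y := comp (p1 Y Y) (p2 X (prd Y Y)) in
  let q3 : hom T Y := comp (p2 Y Y) (p2 X (prd Y Y)) in
  le (d := P) (meet (reidx (pair q1 q2) a) (reidx (pair q1 q3) a))
              (reidx (pair q2 q3) (delta Y)).

Definition entire {X Y : C} (a : P (prd X Y)) : Prop :=
  le (d := P) (top X) (ex (Y := Y) a).

End Rel.

(* Read P as a logic of generalized elements: for [f g : Z -> Y] and [c : P Z],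
   [c <= eq_at f g] says that [f = g] holds under [c].  The elementary structure
   makes this equality reflexive and substitutive (Leibniz), which is all that is
   needed to compute, in context [x, y1, y2],
     copy;(phi (x) phi) = phi(x,y1) /\ phi(x,y2),   phi;copy = phi(x,y1) /\ y1 = y2,
   and, since [disc] is top, [phi;disc = exists y. phi(x,y)].  The two inequalities
   defining a map are then literally functionality and entirety. *)

Set Implicit Arguments.
Unset Strict Implicit.
Set Universe Polymorphism.

Section ProductFacts.
Context {C : FPCat}.

Lemma comp_assoc_r (X Y Z W : C) (h : hom Z W) (g : hom Y Z) (f : hom X Y) :
  comp (comp h g) f = comp h (comp g f).
Proof. symmetry; apply comp_assoc. Qed.

Lemma pair_ext (Z X Y : C) (h k : hom Z (prd X Y)) :
  comp (p1 X Y) h = comp (p1 X Y) k -> comp (p2 X Y) h = comp (p2 X Y) k -> h = k.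
Proof. intros E1 E2; rewrite <- (pair_uniq h), <- (pair_uniq k), E1, E2; reflexivity. Qed.

Lemma pair_comp (W Z X Y : C) (f : hom Z X) (g : hom Z Y) (h : hom W Z) :
  comp (pair f g) h = pair (comp f h) (comp g h).
Proof. apply pair_ext; rewrite !comp_assoc, ?pair_p1, ?pair_p2; reflexivity. Qed.

Lemma pair_p1_p2 (X Y : C) : pair (p1 X Y) (p2 X Y) = idm (prd X Y).
Proof. rewrite <- (pair_uniq (idm (prd X Y))), !comp_id_r; reflexivity. Qed.

Lemma bang_comp (X Y : C) (f : hom X Y) : comp (bang Y) f = bang X.
Proof. apply bang_uniq. Qed.

End ProductFacts.

Hint Rewrite @comp_assoc_r @comp_id_l @comp_id_r @pair_comp @pair_p1 @pair_p2
  @pair_p1_p2 @bang_comp : catnorm.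

Section DoctrineFacts.
Context {C : FPCat} (P : Doctrine C).

Lemma le_meet_l (X : C) (a b : P X) : le (meet a b) a.
Proof. exact (proj1 (proj1 (meet_glb a b (meet a b)) (le_refl _))). Qed.

Lemma le_meet_r (X : C) (a b : P X) : le (meet a b) b.
Proof. exact (proj2 (proj1 (meet_glb a b (meet a b)) (le_refl _))). Qed.

Lemma le_meet (X : C) (a b c : P X) : le c a -> le c b -> le c (meet a b).
Proof. intros; apply meet_glb; split; assumption. Qed.

Lemma meet_top_r (X : C) (a : P X) : meet a (top X) = a.
Proof. apply le_antisym; [apply le_meet_l | apply le_meet; [apply le_refl | apply top_max]]. Qed.

Lemma reidx_comp_r (X Y Z : C) (f : hom X Y) (g : hom Y Z) (a : P Z) :
  reidx f (reidx g a) = reidx (comp g f) a.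
Proof. symmetry; apply reidx_comp. Qed.

Lemma reidx_mono (X Y : C) (f : hom X Y) (a b : P Y) :
  le a b -> le (reidx f a) (reidx f b).
Proof.
  intro Hab.
  assert (Ea : meet a b = a) by (apply le_antisym; [apply le_meet_l | apply le_meet; auto using le_refl]).
  rewrite <- Ea, reidx_meet; apply le_meet_r.
Qed.

End DoctrineFacts.

Hint Rewrite @reidx_meet @reidx_comp_r @reidx_top @reidx_id : catnorm.

Ltac catnorm := unfold prodm, diag; autorewrite with catnorm.
Ltac catnorm_in H := unfold prodm, diag in H; autorewrite with catnorm in H.

Ltac meet_proj :=
  first [ apply le_refl
        | eapply le_trans; [apply le_meet_l | meet_proj]
        | eapply le_trans; [apply le_meet_r | meet_proj] ].

Section InternalLogic.
Context {C : FPCat} (P : ElemExDoctrine C).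

Definition eq_at {Z Y : C} (f g : hom Z Y) : P Z := reidx (pair f g) (@delta _ P Y).

Lemma eq_at_refl (Z Y : C) (f : hom Z Y) (c : P Z) : le c (eq_at f f).
Proof.
  pose (q := pair (comp (p1 Y Y) (p2 Z (prd Y Y))) (comp (p2 Y Y) (p2 Z (prd Y Y)))).
  assert (Hq : le (top (prd Z Y)) (reidx (prodm (idm Z) (diag Y)) (reidx q (@delta _ P Y)))).
  { apply delta_adj, le_meet_r. }
  apply (reidx_mono (pair (idm Z) f)) in Hq.
  unfold q, eq_at in *; catnorm_in Hq.
  eapply le_trans; [apply top_max | exact Hq].
Qed.

Lemma eq_at_subst (Z X Y : C) (a : P (prd X Y)) (h : hom Z X) (f g : hom Z Y) (c : P Z) :
  le c (reidx (pair h f) a) -> le c (eq_at f g) -> le c (reidx (pair h g) a).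
Proof.
  intros Ha Hfg.
  (* [b] is [a] read at the last copy of [Y]; it restricts to [a] along the diagonal,
     so the adjunction for [delta] gives [a(x,y) /\ y = y' <= a(x,y')]. *)
  pose (b := reidx (pair (p1 X (prd Y Y)) (comp (p2 Y Y) (p2 X (prd Y Y)))) a).
  assert (Hb : le a (reidx (prodm (idm X) (diag Y)) b)).
  { unfold b; catnorm; apply le_refl. }
  apply delta_adj, (reidx_mono (pair h (pair f g))) in Hb.
  unfold b in Hb; catnorm_in Hb.
  eapply le_trans; [apply le_meet; [exact Ha | exact Hfg] | exact Hb].
Qed.

Lemma eq_at_subst_l (Z X Y : C) (a : P (prd X Y)) (f g : hom Z X) (h : hom Z Y) (c : P Z) :
  le c (reidx (pair f h) a) -> le c (eq_at f g) -> le c (reidx (pair g h) a).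
Proof.
  intros Ha Hfg.
  assert (S := eq_at_subst (a := reidx (pair (p2 Y X) (p1 Y X)) a) (h := h) (f := f) (g := g) (c := c)).
  catnorm_in S; exact (S Ha Hfg).
Qed.

Lemma eq_at_sym (Z Y : C) (f g : hom Z Y) (c : P Z) :
  le c (eq_at f g) -> le c (eq_at g f).
Proof. apply eq_at_subst_l, eq_at_refl. Qed.

Lemma eq_at_trans (Z Y : C) (f g h : hom Z Y) (c : P Z) :
  le c (eq_at f g) -> le c (eq_at g h) -> le c (eq_at f h).
Proof. apply eq_at_subst. Qed.

Lemma eq_at_comp (Z Y W : C) (k : hom Y W) (f g : hom Z Y) (c : P Z) :
  le c (eq_at f g) -> le c (eq_at (comp k f) (comp k g)).
Proof.
  assert (S := eq_at_subst (a := reidx (prodm k k) (@delta _ P W)) (h := f) (f := f) (g := g) (c := c)).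
  unfold eq_at in *; catnorm_in S; apply S, eq_at_refl.
Qed.

Lemma eq_at_pair (Z Y V : C) (f f' : hom Z Y) (g g' : hom Z V) (c : P Z) :
  le c (eq_at f f') -> le c (eq_at g g') -> le c (eq_at (pair f g) (pair f' g')).
Proof.
  intros Hf Hg.
  (* Rewrite [f] into [f'], then [g] into [g'], inside [(f,g) = (f,g)]. *)
  assert (Sf := eq_at_subst
    (a := reidx (pair (comp (pair f g) (p1 Z Y)) (pair (p2 Z Y) (comp g (p1 Z Y)))) (@delta _ P (prd Y V)))
    (h := idm Z) (f := f) (g := f') (c := c)).
  assert (Sg := eq_at_subst
    (a := reidx (pair (comp (pair f g) (p1 Z V)) (pair (comp f' (p1 Z V)) (p2 Z V))) (@delta _ P (prd Y V)))
    (h := idm Z) (f := g) (g := g') (c := c)).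
  unfold eq_at in *; catnorm_in Sf; catnorm_in Sg.
  apply Sg; [apply Sf; [apply eq_at_refl | exact Hf] | exact Hg].
Qed.

Lemma eq_at_prod_ext (Z Y V : C) (h k : hom Z (prd Y V)) (c : P Z) :
  le c (eq_at (comp (p1 Y V) h) (comp (p1 Y V) k)) ->
  le c (eq_at (comp (p2 Y V) h) (comp (p2 Y V) k)) -> le c (eq_at h k).
Proof. intros H1 H2; rewrite <- (pair_uniq h), <- (pair_uniq k); exact (eq_at_pair H1 H2). Qed.

Lemma ex_intro (Z Y : C) (b : P (prd Z Y)) (w : hom Z Y) (c : P Z) :
  le c (reidx (pair (idm Z) w) b) -> le c (ex b).
Proof.
  intro Hc; eapply le_trans; [exact Hc |].
  assert (Hb : le b (reidx (p1 Z Y) (ex b))) by (apply ex_adj, le_refl).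
  apply (reidx_mono (pair (idm Z) w)) in Hb; catnorm_in Hb; exact Hb.
Qed.

End InternalLogic.

Arguments eq_at {C P Z Y} f g.

Section RelMaps.
Context {C : FPCat} (P : ElemExDoctrine C).

Lemma rel_comp_copy_tensor (X Y V : C) (phi : RelHom P X Y) (psi : RelHom P X V) :
  rel_comp (copy P X) (rel_tensor phi psi) =
  meet (reidx (pair (p1 X (prd Y V)) (comp (p1 Y V) (p2 X (prd Y V)))) phi)
       (reidx (pair (p1 X (prd Y V)) (comp (p2 Y V) (p2 X (prd Y V)))) psi).
Proof.
  unfold rel_comp, rel_tensor, copy, Gamma.
  apply le_antisym.
  - apply ex_adj; catnorm.
    set (x := comp (p1 X (prd Y V)) _).
    set (u := p2 _ (prd X X)).
    set (body := meet _ _).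
    assert (Hu : le body (eq_at (pair x x) u)) by (unfold body; meet_proj).
    assert (Hu1 := eq_at_sym (eq_at_comp (p1 X X) Hu)).
    assert (Hu2 := eq_at_sym (eq_at_comp (p2 X X) Hu)).
    catnorm_in Hu1; catnorm_in Hu2.
    apply le_meet.
    + apply (eq_at_subst_l (f := comp (p1 X X) u)); [unfold body; meet_proj | exact Hu1].
    + apply (eq_at_subst_l (f := comp (p2 X X) u)); [unfold body; meet_proj | exact Hu2].
  - apply ex_intro with (w := comp (diag X) (p1 X (prd Y V))); catnorm.
    apply le_meet; [apply eq_at_refl | apply le_refl].
Qed.

Lemma rel_comp_copy (X Y : C) (phi : RelHom P X Y) :
  rel_comp phi (copy P Y) =
  meet (reidx (pair (p1 X (prd Y Y)) (comp (p1 Y Y) (p2 X (prd Y Y)))) phi)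
       (eq_at (comp (p1 Y Y) (p2 X (prd Y Y))) (comp (p2 Y Y) (p2 X (prd Y Y)))).
Proof.
  unfold rel_comp, copy, Gamma, eq_at.
  apply le_antisym.
  - apply ex_adj; catnorm.
    set (y := p2 (prd X (prd Y Y)) Y).
    set (ys := comp (p2 X (prd Y Y)) _).
    set (body := meet _ _).
    assert (Hy : le body (eq_at (pair y y) ys)) by (unfold body; meet_proj).
    assert (Hy1 := eq_at_comp (p1 Y Y) Hy).
    assert (Hy2 := eq_at_comp (p2 Y Y) Hy).
    catnorm_in Hy1; catnorm_in Hy2.
    apply le_meet.
    + apply (eq_at_subst (f := y)); [unfold body; meet_proj | exact Hy1].
    + exact (eq_at_trans (eq_at_sym Hy1) Hy2).
  - apply ex_intro with (w := comp (p1 Y Y) (p2 X (prd Y Y))); catnorm.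
    apply le_meet; [apply le_meet_l |].
    apply eq_at_prod_ext; catnorm; [apply eq_at_refl | apply le_meet_r].
Qed.

Lemma disc_top (X : C) : disc P X = top (prd X one).
Proof.
  apply le_antisym; [apply top_max |].
  unfold disc, Gamma; catnorm; rewrite (bang_uniq (p2 X one)).
  apply eq_at_refl.
Qed.

Lemma rel_comp_disc (X Y : C) (phi : RelHom P X Y) :
  rel_comp phi (disc P Y) = reidx (p1 X one) (ex phi).
Proof.
  unfold rel_comp; rewrite disc_top, reidx_top, meet_top_r, ex_BC.
  catnorm; reflexivity.
Qed.

Lemma functional_iff (X Y : C) (phi : RelHom P X Y) :
  functional phi <-> le (rel_comp (copy P X) (rel_tensor phi phi)) (rel_comp phi (copy P Y)).
Proof.
  unfold functional; rewrite rel_comp_copy_tensor, rel_comp_copy.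
  split; intro H.
  - apply le_meet; [apply le_meet_l | exact H].
  - eapply le_trans; [exact H | apply le_meet_r].
Qed.

Lemma entire_iff (X Y : C) (phi : RelHom P X Y) :
  entire phi <-> le (disc P X) (rel_comp phi (disc P Y)).
Proof.
  unfold entire; rewrite disc_top, rel_comp_disc.
  split; intro H.
  - rewrite <- (@reidx_top _ P _ _ (p1 X one)); apply reidx_mono, H.
  - apply (reidx_mono (pair (idm X) (bang X))) in H; catnorm_in H; exact H.
Qed.

End RelMaps.

Theorem proposition29 (C : FPCat) (P : ElemExDoctrine C) (X Y : C)
    (phi : P (prd X Y)) :
  @is_map C P X Y phi <-> (@functional C P X Y phi /\ @entire C P X Y phi).
Proof.
  pose proof (functional_iff phi); pose proof (entire_iff phi).
  unfold is_map; tauto.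
Qed.
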